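(* Let $Q$ be a QNP. If a policy $\pi$ solves the FOND problem $P=T(Q)$ (i.e. is a strong cyclic solution of it), then the controller $\pi_M$ solves $Q$.
   Context: QNPs: $Q=\langle F,V,I,O,G\rangle$ with propositional variables $F$, numerical variables $V$ (non-negative reals), literals $p,\neg p$, $X=0$, $X>0$; actions with precondition $Pre(a)$, propositional effects $\mathit{Eff}(a)$, numerical effects $N(a)\subseteq\{Inc(X),Dec(X)\}$ (at most one per variable; $Dec(X)\in N(a)$ implies $X>0\in Pre(a)$). A state $s$ assigns truth values to $F$ and reals $\ge0$ to $V$; initial states satisfy $I$ (closed world); goal states satisfy $G$; for applicable $a$, $s'\in F_Q(a,s)$ iff $s'$ applies the propositional effects, $s'[X]>s[X]$ for $Inc(X)$, $s'[X]<s[X]$ for $Dec(X)$, rest unchanged. The boolean state $\bar s$ is the truth valuation of $s$ on atoms $p\in F$ and $X=0$. The FOND problem $T(Q)$: $n=|F|+|V|$, $Max=1+2^n$. Propositional variables: $F$, $p_{X=0}$ ($X\in V$; $X=0$/$X>0$ denote $p_{X=0}$/$\neg p_{X=0}$) — these make up the boolean states of $Q$ — and the memory atoms $in(X)$, $depth(d)$ ($0\le d\le|V|$), $index(X,d)$ ($1\le d\le|V|$), counters $c(d)$ ($0\le d\le|V|$), $c_T$ over $\{0,\dots,Max\}$ encoded in binary. Initial state: $I$ plus $depth(0)$, counters $0$, other memory atoms false; goal $G$. Actions: $Push(X,d)$ ($0\le d<|V|$): pre $\neg in(X),depth(d),c(d)<Max$; eff $in(X),index(X,d+1),depth(d+1),\neg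 depth(d),c(d):=c(d)+1,c(d+1):=0$. $Pop(X,d)$ ($1\le d\le|V|$): pre $in(X),index(X,d),depth(d)$; eff $\neg in(X),\neg index(X,d),\neg depth(d),depth(d-1)$. $Move$: pre $depth(0),c_T<Max$; eff $c_T:=c_T+1$. For $a\in O$ with no $Dec$ effect: action $a$ with pre $Pre(a)$ plus $\neg in(Y)$ for each $Inc(Y)\in N(a)$, eff $\mathit{Eff}(a)$ plus $Y>0$ for each $Inc(Y)\in N(a)$. For $a$ with a $Dec$ effect, $X$ with $Dec(X)\in N(a)$, $1\le d\le|V|$: action $a(X,d)$ with pre $Pre(a)$, $\neg in(Y)$ for $Inc(Y)\in N(a)$, $index(X,d)$; eff $\mathit{Eff}(a)$, $Y>0$ for $Inc(Y)\in N(a)$, nondeterministic $Z>0\mid Z=0$ for each $Dec(Z)\in N(a)$, $c(d'):=0$ for $d\le d'\le|V|$. A strong cyclic solution of a FOND problem is a policy such that from every state reachable from the initial state under $\pi$ some goal state is reachable under $\pi$. Controller $\pi_M$: a memory state $m$ is a valuation of the memory atoms, with $m_0$ the initial one; a state of $T(Q)$ is a pair $(\bar s,m)$. An execution of $\pi_M$ on $Q$ is a sequence of pairs $(s_i,m_i)$ with $s_0$ an initial state of $Q$ and $m_0$ the initial memory, where $b_i=\pi(\bar s_i,m_i)$ is defined and its preconditions hold in $(\bar s_i,m_i)$ (numerical literals evaluated in $s_i$), and: if $b_i$ is $Push$, $Pop$ or $Move$, then $s_{i+1}=s_i$ and $m_{i+1}$ results from $m_i$ by the effects of $b_i$; if $b_i$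 is $a$ or $a(X,d)$, then $s_{i+1}\in F_Q(a,s_i)$ and $m_{i+1}$ results from $m_i$ by the counter effects of $b_i$. For $\epsilon>0$ the execution is an $\epsilon$-execution if each change of a numerical variable has magnitude $\ge\epsilon$ unless it goes from a value $<\epsilon$ to $0$. It is maximal if infinite without goal, ending at its first pair with $s_i$ a goal state, or ending where $\pi$ is undefined or its action inapplicable. $\pi_M$ solves $Q$ iff for every $\epsilon>0$ every maximal $\epsilon$-execution reaches a pair whose $Q$-state is a goal state. *)

From HB Require Import structures.
From mathcomp Require Import all_boot all_order all_algebra.
From mathcomp Require Import reals.
From Stdlib Require Import Relations.
From Stdlib Require List.

Set Implicit Arguments.
Unset Strict Implicit.
Unset Printing Implicit Defensive.

Import Order.TTheory GRing.Theory Num.Theory.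

(* Literals: [PLit p true] is p, [PLit p false] is ~p;
   [NLit X true] is X = 0, [NLit X false] is X > 0. *)
Inductive lit (F V : Type) :=
| PLit of F & bool
| NLit of V & bool.
Arguments PLit {F V}.
Arguments NLit {F V}.

Inductive neff := NoEff | Inc | Dec.

Record QNP := {
  qF : finType;
  qV : finType;
  qO : finType;
  qI : seq (lit qF qV);
  qG : seq (lit qF qV);
  qPre : qO -> seq (lit qF qV);
  qEff : qO -> seq (qF * bool);
  qN : qO -> qV -> neff;
  qN_dec_pre : forall a X, qN a X = Dec -> List.In (NLit X false) (qPre a)
}.

Section QNPSemantics.
Variable Q : QNP.
Local Notation F := (qF Q).
Local Notation V := (qV Q).
Local Notation O := (qO Q).

(* Boolean states: truth values of the atoms p (p in F) and X = 0 (X in V).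
   These are also the boolean part of the states of T(Q). *)
Record bstate := { bF : F -> bool; bZ : V -> bool }.

Definition bsat_lit (b : bstate) (l : lit F V) : Prop :=
  match l with
  | PLit p v => bF b p = v
  | NLit X z => bZ b X = z
  end.

Definition bsat (b : bstate) (L : seq (lit F V)) : Prop :=
  forall l, List.In l L -> bsat_lit b l.

Definition cw_sat (L : seq (lit F V)) (b : bstate) : Prop :=
  bsat b L /\
  (forall p, bF b p = true -> List.In (PLit p true) L) /\
  (forall X, bZ b X = true -> List.In (NLit X true) L).

Variable R : realType.

Record qstate := { sF : F -> bool; sV : V -> R }.

Definition qvalid (s : qstate) : Prop := forall X, (0 <= sV s X)%R.

Definition bar (s : qstate) : bstate :=
  {| bF := sF s; bZ := fun X => sV s X == 0%R |}.

Definition qinit (s : qstate) : Prop := qvalid s /\ cw_sat (qI Q) (bar s).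
Definition qgoal (s : qstate) : Prop := bsat (bar s) (qG Q).

(* s' in F_Q(a, s)  (applicability of a is checked separately) *)
Definition qsucc (a : O) (s s' : qstate) : Prop :=
  qvalid s' /\
  (forall p v, List.In (p, v) (qEff a) -> sF s' p = v) /\
  (forall p, (forall v, ~ List.In (p, v) (qEff a)) -> sF s' p = sF s p) /\
  (forall X, match qN a X with
             | Inc => (sV s X < sV s' X)%R
             | Dec => (sV s' X < sV s X)%R
             | NoEff => sV s' X = sV s X
             end).

End QNPSemantics.

Record FOND := {
  fst_ : Type;
  fact : Type;
  finit : fst_ -> Prop;
  fgoal : fst_ -> Prop;
  fapp : fact -> fst_ -> Prop;
  fsucc : fact -> fst_ -> fst_ -> Prop
}.

Definition fpolicy (P : FOND) := fst_ P -> option (fact P).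

Definition pstep (P : FOND) (pi : fpolicy P) (s s' : fst_ P) : Prop :=
  ~ fgoal s /\ exists a, pi s = Some a /\ fapp a s /\ fsucc a s s'.

Definition preach (P : FOND) (pi : fpolicy P) : relation (fst_ P) :=
  clos_refl_trans (fst_ P) (pstep pi).

Definition strong_cyclic (P : FOND) (pi : fpolicy P) : Prop :=
  forall s0 s, finit s0 -> preach pi s0 s ->
    exists g, preach pi s g /\ fgoal g.

Section Translation.
Variable Q : QNP.
Local Notation F := (qF Q).
Local Notation V := (qV Q).
Local Notation O := (qO Q).

Definition nV : nat := #|V|.
Definition Max : nat := 1 + 2 ^ (#|F| + #|V|).

(* Memory states: valuations of in(X), depth(d), index(X,d) and the
   counters c(d), c_T (values in {0..Max}, kept as naturals).  Only the
   indices 0 <= d <= |V| are meaningful; the others are never touched. *)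
Record mem := {
  m_in : V -> bool;
  m_depth : nat -> bool;
  m_index : V -> nat -> bool;
  m_c : nat -> nat;
  m_cT : nat
}.

Definition m0 : mem :=
  {| m_in := fun _ => false; m_depth := fun d => d == 0;
     m_index := fun _ _ => false; m_c := fun _ => 0; m_cT := 0 |}.

Definition push_mem (X : V) (d : nat) (m : mem) : mem :=
  {| m_in := fun Y => if Y == X then true else m_in m Y;
     m_depth := fun k => if k == d.+1 then true
                         else if k == d then false else m_depth m k;
     m_index := fun Y k => if (Y == X) && (k == d.+1) then true
                           else m_index m Y k;
     m_c := fun k => if k == d then (m_c m d).+1
                     else if k == d.+1 then 0 else m_c m k;
     m_cT := m_cT m |}.

Definition pop_mem (X : V) (d : nat) (m : mem) : mem :=
  {| m_in := fun Y => if Y == X then false else m_in m Y;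
     m_depth := fun k => if k == d then false
                         else if k == d.-1 then true else m_depth m k;
     m_index := fun Y k => if (Y == X) && (k == d) then false
                           else m_index m Y k;
     m_c := m_c m;
     m_cT := m_cT m |}.

Definition move_mem (m : mem) : mem :=
  {| m_in := m_in m; m_depth := m_depth m; m_index := m_index m;
     m_c := m_c m; m_cT := (m_cT m).+1 |}.

Definition reset_mem (d : nat) (m : mem) : mem :=
  {| m_in := m_in m; m_depth := m_depth m; m_index := m_index m;
     m_c := fun k => if (d <= k) && (k <= nV) then 0 else m_c m k;
     m_cT := m_cT m |}.

Inductive tact :=
| Push of V & nat
| Pop of V & nat
| Move
| Act of O
| ActD of O & V & nat.

Definition tstate := (bstate Q * mem)%type.

Definition tpre_a (a : O) (t : tstate) : Prop :=
  bsat t.1 (qPre a) /\ (forall Y, qN a Y = Inc -> m_in t.2 Y = false).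

(* boolean effects of a / a(X,d): Eff(a), Y>0 for Inc(Y), the atom X=0 is
   nondeterministic for Dec(X), everything else unchanged *)
Definition beff (a : O) (b b' : bstate Q) : Prop :=
  (forall p v, List.In (p, v) (qEff a) -> bF b' p = v) /\
  (forall p, (forall v, ~ List.In (p, v) (qEff a)) -> bF b' p = bF b p) /\
  (forall Y, qN a Y = Inc -> bZ b' Y = false) /\
  (forall Y, qN a Y = NoEff -> bZ b' Y = bZ b Y).

Definition tapp (b : tact) (t : tstate) : Prop :=
  let m := t.2 in
  match b with
  | Push X d => d < nV /\ m_in m X = false /\ m_depth m d /\ m_c m d < Max
  | Pop X d => 1 <= d <= nV /\ m_in m X /\ m_index m X d /\ m_depth m d
  | Move => m_depth m 0 /\ m_cT m < Max
  | Act a => (forall Y, qN a Y <> Dec) /\ tpre_a a t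
  | ActD a X d => qN a X = Dec /\ 1 <= d <= nV /\ tpre_a a t /\ m_index m X d
  end.

Definition tsucc (b : tact) (t t' : tstate) : Prop :=
  match b with
  | Push X d => t'.1 = t.1 /\ t'.2 = push_mem X d t.2
  | Pop X d => t'.1 = t.1 /\ t'.2 = pop_mem X d t.2
  | Move => t'.1 = t.1 /\ t'.2 = move_mem t.2
  | Act a => beff a t.1 t'.1 /\ t'.2 = t.2
  | ActD a X d => beff a t.1 t'.1 /\ t'.2 = reset_mem d t.2
  end.

Definition tinit (t : tstate) : Prop := cw_sat (qI Q) t.1 /\ t.2 = m0.
Definition tgoal (t : tstate) : Prop := bsat t.1 (qG Q).

Definition TQ : FOND :=
  {| fst_ := tstate; fact := tact; finit := tinit; fgoal := tgoal;
     fapp := tapp; fsucc := tsucc |}.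

Variable R : realType.
Local Notation qst := (qstate Q R).

Definition cstep (pi : fpolicy TQ) (x y : qst * mem) : Prop :=
  let (s, m) := x in let (s', m') := y in
  exists b, pi (bar s, m) = Some b /\ tapp b (bar s, m) /\
  match b with
  | Push X d => s' = s /\ m' = push_mem X d m
  | Pop X d => s' = s /\ m' = pop_mem X d m
  | Move => s' = s /\ m' = move_mem m
  | Act a => qsucc a s s' /\ m' = m
  | ActD a X d => qsucc a s s' /\ m' = reset_mem d m
  end.

(* A (finite or infinite) sequence of pairs: [f i] for [i] in the index set,
   which is {0..n} if [len = Some n] and all of nat if [len = None]. *)
Definition within (len : option nat) (i : nat) : Prop :=
  match len with None => True | Some n => i <= n end.

Definition is_exec (pi : fpolicy TQ) (f : nat -> qst * mem) (len : option nat)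
  : Prop :=
  qinit (f 0).1 /\ (f 0).2 = m0 /\
  forall i, within len i.+1 -> cstep pi (f i) (f i.+1).

Definition eps_step (eps : R) (s s' : qst) : Prop :=
  forall X, sV s' X <> sV s X ->
    (eps <= `|sV s' X - sV s X|)%R \/
    ((sV s X < eps)%R /\ sV s' X = 0%R).

Definition is_eps_exec (pi : fpolicy TQ) (eps : R) (f : nat -> qst * mem)
  (len : option nat) : Prop :=
  is_exec pi f len /\
  forall i, within len i.+1 -> eps_step eps (f i).1 (f i.+1).1.

Definition is_maximal (pi : fpolicy TQ) (f : nat -> qst * mem)
  (len : option nat) : Prop :=
  match len with
  | None => forall i, ~ qgoal (f i).1
  | Some n =>
      (qgoal (f n).1 /\ forall i, i < n -> ~ qgoal (f i).1) \/
      ~ (exists b, pi (bar (f n).1, (f n).2) = Some b /\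
                   tapp b (bar (f n).1, (f n).2))
  end.

Definition controller_solves (pi : fpolicy TQ) : Prop :=
  forall eps : R, (0 < eps)%R ->
  forall f len, is_eps_exec pi eps f len -> is_maximal pi f len ->
    exists i, within len i /\ qgoal (f i).1.

End Translation.

(* A finite maximal execution that ends at a non-goal pair is mirrored by a
   trajectory of T(Q) under pi, so strong cyclicity forces pi to be defined
   and applicable at its last state.  For an infinite execution avoiding the
   goal, let d be the least stack depth visited infinitely often; eventually
   the depth stays >= d.  If actions a(X,k) with k <= d occur infinitely
   often, some X is decremented infinitely often while index(X,k) stays on
   the stack, so in(X) holds and X is never incremented: impossible for a
   nonnegative variable in an eps-execution.  Otherwise the counter c(d) never
   decreases and bounds the pushes at depth d, c_T bounds the Moves, and
   eventually only actions without Dec effects are taken at depth d; the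
   trajectory of T(Q) is then deterministic, and strong cyclicity would make
   it reach a goal. *)

From Pilot Require Import Defs.
From mathcomp Require Import all_boot all_order all_algebra reals.
From mathcomp Require Import lra zify.
From Stdlib Require Import Classical FunctionalExtensionality Relations.

Set Implicit Arguments.
Unset Strict Implicit.
Unset Printing Implicit Defensive.

Import Order.TTheory GRing.Theory Num.Theory.

Definition eventually (P : nat -> Prop) : Prop := exists N, forall i, N <= i -> P i.

Definition infinitely_often (P : nat -> Prop) : Prop :=
  forall N, exists2 i, N <= i & P i.

Lemma eventually_and (P1 P2 : nat -> Prop) :
  eventually P1 -> eventually P2 -> eventually (fun i => P1 i /\ P2 i).
Proof.
move=> [N1 H1] [N2 H2]; exists (maxn N1 N2) => i.
by rewrite geq_max => /andP[/H1 ? /H2].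
Qed.

Lemma eventually_all (T : finType) (P : T -> nat -> Prop) :
  (forall x, eventually (P x)) -> eventually (fun i => forall x, P x i).
Proof.
move=> HP; suff [N HN] : eventually (fun i => forall x, x \in enum T -> P x i).
  by exists N => i /HN Hi x; apply: Hi; rewrite mem_enum.
elim: (enum T) => [|x s IH]; first by exists 0.
have [N HN] := eventually_and (HP x) IH.
by exists N => i /HN [Pxi Psi] y; rewrite in_cons => /predU1P [->|/Psi].
Qed.

Lemma not_eventually (P : nat -> Prop) :
  ~ eventually P -> infinitely_often (fun i => ~ P i).
Proof.
move=> HP N; apply: NNPP => Hno; apply: HP; exists N => i Ni.
by apply: NNPP => nPi; apply: Hno; exists i.
Qed.

Lemma not_infinitely_often (P : nat -> Prop) :
  ~ infinitely_often P -> eventually (fun i => ~ P i).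
Proof.
move=> HP; apply: NNPP => /not_eventually Hio; apply: HP => N.
by have [i Ni /NNPP] := Hio N; exists i.
Qed.

Lemma infinitely_often_pigeonhole (T : finType) (E : nat -> T -> Prop) :
  infinitely_often (fun i => exists x, E i x) ->
  exists x, infinitely_often (fun i => E i x).
Proof.
move=> HE; apply: NNPP => Hno.
have [N HN] : eventually (fun i => forall x, ~ E i x).
  by apply: eventually_all => x; apply: not_infinitely_often => Hx; apply: Hno; exists x.
by have [i /HN Hi [x]] := HE N; apply: Hi.
Qed.

Lemma bounded_liminf (D : nat -> nat) (B : nat) : (forall i, D i <= B) ->
  exists d, eventually (fun i => d <= D i) /\ infinitely_often (fun i => D i = d).
Proof.
move=> DB; pose P d := eventually (fun i => d <= D i).
have [d [Pd nPd]] : exists d, P d /\ ~ P d.+1.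
  have : ~ P B.+1 by case=> N /(_ N (leqnn N)); rewrite ltnNge DB.
  have : P 0 by exists 0.
  elim: B.+1 => [//|b IH] P0 nPb; have [Pb|nPb'] := classic (P b); first by exists b.
  exact: IH.
exists d; split=> // M; have [N HN] := Pd; have [i] := not_eventually nPd (maxn M N).
by rewrite geq_max => /andP[Mi /HN dDi] Dilt; exists i => //; lia.
Qed.

Lemma measure_eventually_stops (mu : nat -> nat) (E : nat -> Prop) :
  eventually (fun i => mu i.+1 <= mu i /\ (E i -> mu i.+1 < mu i)) ->
  eventually (fun i => ~ E i).
Proof.
move=> [N HN]; apply: not_infinitely_often => HE.
have mu_mono i j : N <= i <= j -> mu j <= mu i.
  case/andP=> Ni /subnKC <-; elim: (j - i) => [|k IH]; first by rewrite addn0.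
  by rewrite addnS; apply: leq_trans IH; case: (HN (i + k)) => //; lia.
suff /(_ (mu N).+1) [j Nj] : forall k, exists2 j, N <= j & mu j + k <= mu N by lia.
elim=> [|k [j Nj IH]]; first by exists N; rewrite ?addn0.
have [i ji Ei] := HE j; have [_ /(_ Ei) lt] := HN i (leq_trans Nj ji).
by exists i.+1; [lia | have := mu_mono j i; lia].
Qed.

Lemma bounded_counter_eventually_stops (c : nat -> nat) (B : nat) (E : nat -> Prop) :
  eventually (fun i => c i <= c i.+1 /\ (E i -> c i < B /\ c i < c i.+1)) ->
  eventually (fun i => ~ E i).
Proof.
move=> [N HN]; apply: (@measure_eventually_stops (fun i => B - c i)).
by exists N => i /HN [le lt]; split=> [|/lt]; lia.
Qed.

Lemma eps_descent_eventually_constant (R : realType) (eps : R) (v : nat -> R) :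
  (0 < eps)%R -> (forall i, 0 <= v i)%R ->
  eventually (fun i => v i.+1 <= v i)%R ->
  (forall i, v i.+1 <> v i ->
     eps <= `|v i.+1 - v i| \/ (v i < eps /\ v i.+1 = 0))%R ->
  eventually (fun i => v i.+1 = v i).
Proof.
move=> eps_gt0 v_ge0 [N HN] v_eps.
(* [mu] bounds the number of strict decreases still to come: each one costs
   at least [eps], except a last drop to 0. *)
pose mu i := Num.truncn (v i / eps) + (v i != 0%R).
suff [M HM] : eventually (fun i => ~ v i.+1 <> v i) by exists M => i /HM /NNPP.
apply: (@measure_eventually_stops mu); exists N => i /HN vle.
have scaled_ge0 j : (0 <= v j / eps)%R by rewrite divr_ge0 ?v_ge0 ?ltW.
rewrite /mu; split=> [|vne].
  apply: leq_add; first by apply: le_truncn; rewrite ler_pM2r ?invr_gt0.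
  have [vi0|] := eqVneq (v i) 0%R; last by rewrite leq_b1.
  suff -> : v i.+1 = 0%R by rewrite eqxx.
  by apply/eqP; rewrite eq_le v_ge0 andbT -vi0.
have lt : (v i.+1 < v i)%R by rewrite lt_neqAle vle andbT; apply/eqP.
have -> : v i != 0%R by apply: lt0r_neq0; apply: le_lt_trans (v_ge0 i.+1) lt.
rewrite addn1 ltnS.
case: (v_eps i vne) => [|[_ ->]]; last by rewrite mul0r truncn0 eqxx.
rewrite ler0_norm ?subr_le0 // opprB => step.
apply: leq_trans (leq_add (leqnn _) (leq_b1 _)) _.
rewrite addn1 truncn_ge_nat // -addn1 natrD.
have tr_le : ((Num.truncn (v i.+1 / eps))%:R <= v i.+1 / eps)%R.
  by rewrite truncn_le scaled_ge0.
suff : (v i.+1 / eps + 1 <= v i / eps)%R by lra.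
rewrite -[1%R](divff (lt0r_neq0 eps_gt0)) -mulrDl ler_pM2r ?invr_gt0 //; lra.
Qed.

Section StrongCyclic.
Variables (P : FOND) (pi : fpolicy P).
Hypothesis pi_sc : strong_cyclic pi.

Lemma strong_cyclic_enabled s0 s : finit s0 -> preach pi s0 s -> ~ fgoal s ->
  exists a, pi s = Some a /\ fapp a s.
Proof.
move=> init reach ngoal; have [g [sg goal]] := pi_sc init reach.
case: (clos_rt_rt1n _ _ _ _ sg) goal => [//|s' _ [_ [a [pa [app _]]]] _ _].
by exists a.
Qed.

Lemma strong_cyclic_forced_path s0 (t : nat -> fst_ P) :
  finit s0 -> preach pi s0 (t 0) ->
  (forall i s, pstep pi (t i) s -> s = t i.+1) -> exists i, fgoal (t i).
Proof.
move=> init reach forced; have [g [tg goal]] := pi_sc init reach.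
suff: forall x, clos_refl_trans_1n _ (pstep pi) x g ->
    forall i, x = t i -> exists j, g = t j.
  by move/(_ _ (clos_rt_rt1n _ _ _ _ tg) 0 erefl) => [i gi]; exists i; rewrite -gi.
move=> x; elim=> [y|y z w yz _ IH] i yi; first by exists i.
by apply: (IH i.+1); apply: forced; rewrite -yi.
Qed.

End StrongCyclic.

Section StackMemory.
Variable Q : QNP.
Local Notation mem := (Defs.mem Q).

Record stack_at (d : nat) (m : mem) : Prop := StackAt {
  depth_at : forall k, m_depth m k = (k == d);
  depth_le : d <= nV Q;
  index_le : forall Y k, m_index m Y k -> 0 < k <= d;
  index_in : forall Y k, m_index m Y k -> m_in m Y;
  index_level_uniq : forall Y k k', m_index m Y k -> m_index m Y k' -> k = k';
  index_var_uniq : forall Y Y' k, m_index m Y k -> m_index m Y' k -> Y = Y'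
}.

Definition stack_depth (m : mem) : nat := find (m_depth m) (iota 0 (nV Q).+1).

Lemma stack_depth_at d m : stack_at d m -> stack_depth m = d.
Proof.
case=> depthE dle _ _ _ _; rewrite /stack_depth (eq_find depthE) -/(index d _).
by rewrite -{1}[d](@nth_iota 0 0 (nV Q).+1) ?index_uniq ?iota_uniq ?size_iota.
Qed.

Lemma stack_at_m0 : stack_at 0 (m0 Q).
Proof. by []. Qed.

Lemma stack_at_push X d m : stack_at d m -> m_in m X = false -> d < nV Q ->
  stack_at d.+1 (push_mem X d m).
Proof.
case=> depthE _ idx_le idx_in lvl_uniq var_uniq inX dlt; split=> //=.
- by move=> k; rewrite depthE; do !case: ifP => /eqP ?; lia.
- by move=> Y k /orP[/andP[_ /eqP->] | /idx_le]; lia.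
- by move=> Y k /orP[/andP[-> _] | /idx_in ->] //; case: ifP.
- move=> Y k k' /orP[/andP[/eqP-> /eqP->]|Hk] /orP[/andP[/eqP YX /eqP->]|Hk'] //.
  + by move/idx_in: Hk'; rewrite inX.
  + by move: Hk; rewrite YX => /idx_in; rewrite inX.
  + exact: lvl_uniq Hk Hk'.
- move=> Y Y' k /orP[/andP[/eqP-> /eqP->]|Hk] /orP[/andP[/eqP-> /eqP kd]|Hk'] //.
  + by move/idx_le: Hk'; lia.
  + by move: Hk; rewrite kd => /idx_le; lia.
  + exact: var_uniq Hk Hk'.
Qed.

Lemma stack_at_pop X d m : stack_at d m -> m_index m X d ->
  stack_at d.-1 (pop_mem X d m).
Proof.
case=> depthE dle idx_le idx_in lvl_uniq var_uniq ixd.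
have d_gt0 : 0 < d by case/andP: (idx_le _ _ ixd).
have idx_sub Y k : m_index (pop_mem X d m) Y k -> m_index m Y k by rewrite /=; case: ifP.
split=> /=; last 2 first.
- by move=> Y k k' /idx_sub + /idx_sub; apply: lvl_uniq.
- by move=> Y Y' k /idx_sub + /idx_sub; apply: var_uniq.
- by move=> k; rewrite depthE; do !case: ifP => /eqP ?; lia.
- lia.
- move=> Y k; case: ifP => // /negbT Ynot Hk; have := idx_le _ _ Hk.
  have [kd|] := eqVneq k d; last lia.
  by move: Hk Ynot; rewrite kd => /var_uniq/(_ ixd) ->; rewrite !eqxx.
- move=> Y k; case: eqVneq => [->|_] /=; last exact: idx_in.
  by case: eqVneq => // kd /lvl_uniq/(_ ixd) /eqP; rewrite (negbTE kd).
Qed.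

Lemma stack_at_move d m : stack_at d m -> stack_at d (move_mem m).
Proof. by case. Qed.

Lemma stack_at_reset e d m : stack_at d m -> stack_at d (reset_mem e m).
Proof. by case. Qed.

Definition mstep (b : tact Q) (m : mem) : mem :=
  match b with
  | Push X d => push_mem X d m
  | Pop X d => pop_mem X d m
  | Move => move_mem m
  | Act _ => m
  | ActD _ _ d => reset_mem d m
  end.

Definition depth_after (b : tact Q) (d : nat) : nat :=
  match b with Push _ _ => d.+1 | Pop _ _ => d.-1 | _ => d end.

Lemma push_level X e bs d m : stack_at d m -> tapp (Push X e) (bs, m) -> e = d.
Proof. by move=> st [_ [_ [+ _]]]; rewrite (depth_at st) => /eqP. Qed.

Lemma pop_level X e bs d m : stack_at d m -> tapp (Pop X e) (bs, m) -> e = d /\ 0 < d.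
Proof. by move=> st [/andP[e_gt0 _] [_ [_ +]]]; rewrite (depth_at st) => /eqP <-. Qed.

Lemma actd_level a X k bs d m : stack_at d m -> tapp (ActD a X k) (bs, m) -> 0 < k <= d.
Proof. by move=> st [_ [_ [_ /(index_le st)]]]. Qed.

Lemma stack_at_mstep b bs d m : stack_at d m -> tapp b (bs, m) ->
  stack_at (depth_after b d) (mstep b m).
Proof.
move=> st; case: b => [X e|X e||a|a X k] app /=.
- move: (push_level st app) => ed; subst e; case: app => dlt [inX _].
  exact: stack_at_push.
- have [ed _] := pop_level st app; subst e; case: app => _ [_ [ixd _]].
  exact: stack_at_pop.
- exact: stack_at_move.
- exact: st.
- exact: stack_at_reset.
Qed.

Lemma index_mstep b bs d m X k : stack_at d m -> tapp b (bs, m) ->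
  m_index m X k -> k <= depth_after b d -> m_index (mstep b m) X k.
Proof.
move=> st; case: b => [Y e|Y e||a|a Y k'] app ixk kle //=; first by case: ifP.
have [-> d_gt0] := pop_level st app; rewrite /= in kle.
by case: ifP => // /andP[_ /eqP kd]; lia.
Qed.

Lemma counter_mstep b bs d m e : stack_at d m -> tapp b (bs, m) -> e <= d ->
  (forall a X k, b = ActD a X k -> e < k) -> m_c m e <= m_c (mstep b m) e.
Proof.
move=> st; case: b => [X e'|X e'||a|a X k] app ed ActD_gt //=.
- rewrite (push_level st app); case: eqP => [->|_]; first exact: leqnSn.
  by case: eqP => // ?; lia.
- by have := ActD_gt a X k erefl; case: ifP => // /andP[? _]; lia.
Qed.

End StackMemory.

Section Executions.
Variables (Q : QNP) (R : realType) (pi : fpolicy (TQ Q)).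
Local Notation qst := (qstate Q R).
Local Notation mem := (Defs.mem Q).

Definition tstate_of (x : qst * mem) : tstate Q := (bar x.1, x.2).

Definition qtrans (b : tact Q) (s s' : qst) : Prop :=
  match b with Act a | ActD a _ _ => qsucc a s s' | _ => s' = s end.

Lemma cstep_inv x y : cstep pi x y -> exists b, pi (tstate_of x) = Some b /\
  [/\ tapp b (tstate_of x), y.2 = mstep b x.2 & qtrans b x.1 y.1].
Proof.
case: x y => s m [s' m'] [b [pb [app eff]]]; exists b; split=> //.
by case: b pb app eff => [X d|X d||a|a X d] _ app [? ->]; split.
Qed.

Lemma qtrans_valid b s s' : qtrans b s s' -> qvalid s -> qvalid s'.
Proof. by case: b => [X d|X d||a|a X d] /= => [->|->|->|[]|[]]. Qed.

Lemma qsucc_beff a (s s' : qst) : qsucc a s s' -> qvalid s -> beff a (bar s) (bar s').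
Proof.
case=> _ [effP [frameP numP]] s_ge0; do 2!split=> //; split=> Y /= NY.
  by have := numP Y; rewrite NY => lt; rewrite gt_eqF // (le_lt_trans (s_ge0 Y)).
by have := numP Y; rewrite NY => ->.
Qed.

Lemma tsucc_qtrans b s s' m : qtrans b s s' -> qvalid s ->
  tsucc b (bar s, m) (bar s', mstep b m).
Proof.
case: b => [X d|X d||a|a X d] /= step s_ge0; rewrite ?step //.
all: by split=> //; apply: qsucc_beff.
Qed.

Lemma beff_det (a : qO Q) (b b1 b2 : bstate Q) : (forall Y, qN a Y <> Dec) ->
  beff a b b1 -> beff a b b2 -> b1 = b2.
Proof.
case: b1 b2 => f1 z1 [f2 z2] noDec.
move=> [/= eff1 [frame1 [inc1 keep1]]] [/= eff2 [frame2 [inc2 keep2]]].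
congr Build_bstate; apply: functional_extensionality => x.
- have [[v xv]|nox] := classic (exists v, List.In (x, v) (qEff a)).
    by rewrite (eff1 _ _ xv) (eff2 _ _ xv).
  have nox' v : ~ List.In (x, v) (qEff a) by move=> xv; apply: nox; exists v.
  by rewrite (frame1 _ nox') (frame2 _ nox').
- case Nx: (qN a x); last by case: (noDec x).
  + by rewrite (keep1 _ Nx) (keep2 _ Nx).
  + by rewrite (inc1 _ Nx) (inc2 _ Nx).
Qed.

Lemma qsucc_nonincreasing a (s s' : qst) X : qsucc a s s' -> qN a X <> Inc ->
  (sV s' X <= sV s X)%R.
Proof. by case=> _ [_ [_ /(_ X)]]; case: (qN a X) => // [->|/ltW]. Qed.

Lemma qtrans_in_nonincreasing b bs m s s' X : m_in m X -> tapp b (bs, m) ->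
  qtrans b s s' -> (sV s' X <= sV s X)%R.
Proof.
move=> inX; case: b => [Y d|Y d||a|a Y k] /=; try by move=> _ ->.
- case=> _ [_ noInc] /qsucc_nonincreasing; apply; by move/noInc; rewrite inX.
- case=> _ [_ [[_ noInc] _]] /qsucc_nonincreasing; apply; by move/noInc; rewrite inX.
Qed.

Lemma qtrans_dec_lt a X k bs m s s' : tapp (ActD a X k) (bs, m) ->
  qtrans (ActD a X k) s s' -> (sV s' X < sV s X)%R.
Proof. by case=> NX _ [_ [_ [_ /(_ X)]]]; rewrite NX. Qed.

Lemma within_pred len i : within len i.+1 -> within len i.
Proof. by case: len => //= n; apply: ltnW. Qed.

Lemma exec_init (f : nat -> qst * mem) len :
  is_exec pi f len -> tinit (tstate_of (f 0)).
Proof. by case=> [[_ ?] [? _]]. Qed.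

Lemma exec_valid (f : nat -> qst * mem) len :
  is_exec pi f len -> forall i, within len i -> qvalid (f i).1.
Proof.
case=> [[s0_ge0 _] [_ steps]]; elim=> [//|i IH] len_i.
have [b [_ [_ _ step]]] := cstep_inv (steps i len_i).
exact: qtrans_valid step (IH (within_pred len_i)).
Qed.

Lemma exec_reach (f : nat -> qst * mem) len :
  is_exec pi f len -> forall i, within len i -> (forall j, j < i -> ~ qgoal (f j).1) ->
  preach pi (tstate_of (f 0)) (tstate_of (f i)).
Proof.
move=> ex; have valid := exec_valid ex; case: ex => [_ [_ steps]].
elim=> [|i IH] len_i nongoal; first exact: rt_refl.
apply: rt_trans (IH (within_pred len_i) (fun j ji => nongoal j (ltnW ji))) _.
apply: rt_step; split; first exact: nongoal.
have [b [pb [app mE step]]] := cstep_inv (steps i len_i); exists b; do 2!split=> //.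
rewrite /tstate_of mE; apply: tsucc_qtrans step _; exact/valid/within_pred.
Qed.

End Executions.

Section InfiniteExecution.
Unset Implicit Arguments.
Variables (Q : QNP) (R : realType) (pi : fpolicy (TQ Q)) (eps : R).
Variable f : nat -> qstate Q R * Defs.mem Q.
Hypotheses (pi_sc : strong_cyclic pi) (eps_gt0 : (0 < eps)%R).
Hypothesis f_exec : is_exec pi f None.
Hypothesis f_eps : forall i, eps_step eps (f i).1 (f i.+1).1.
Hypothesis f_nongoal : forall i, ~ qgoal (f i).1.

Local Notation t i := (tstate_of (f i)).
Local Notation D i := (stack_depth (f i).2).

Lemma exec_enabled i : exists b, pi (t i) = Some b.
Proof. by case: f_exec => _ [_ /(_ i I)/cstep_inv [b [pb _]]]; exists b. Qed.

Lemma exec_stepE i b : pi (t i) = Some b ->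
  [/\ tapp b (t i), (f i.+1).2 = mstep b (f i).2 & qtrans b (f i).1 (f i.+1).1].
Proof. by case: f_exec => _ [_ /(_ i I)/cstep_inv [b' [-> step]]] [<-]. Qed.

Lemma exec_qvalid i : qvalid (f i).1.
Proof. exact (exec_valid f_exec I). Qed.

Lemma exec_stack i : stack_at (D i) (f i).2.
Proof.
elim: i => [|i IH].
  by case: f_exec => _ [-> _]; rewrite (stack_depth_at (stack_at_m0 Q)).
have [b /exec_stepE [app -> _]] := exec_enabled i.
by have st := stack_at_mstep IH app; rewrite (stack_depth_at st).
Qed.

Lemma exec_depth_step i b : pi (t i) = Some b -> D i.+1 = depth_after b (D i).
Proof.
case/exec_stepE=> app -> _; apply: stack_depth_at.
exact: stack_at_mstep (exec_stack i) app.
Qed.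

Lemma not_eventually_Act : ~ eventually (fun i => exists a, pi (t i) = Some (Act a)).
Proof.
case=> T HT; have [] := @strong_cyclic_forced_path _ _ pi_sc _ (fun j => t (T + j))
  (exec_init f_exec) (exec_reach f_exec I (fun j _ => f_nongoal j)).
- move=> j [s1 m1] [_ [b [pb [app succ]]]]; have [a pa] := HT (T + j) (leq_addr _ _).
  move: pb app succ; rewrite pa => -[<-] app [/= beff1 ->].
  have [_ mE step] := exec_stepE _ _ pa; rewrite addnS /tstate_of mE; congr pair.
  exact: beff_det (proj1 app) beff1 (qsucc_beff step (exec_qvalid _)).
- by move=> j; apply: f_nongoal.
Qed.

Lemma index_persistent j0 X k : m_index (f j0).2 X k ->
  (forall j, j0 <= j -> k <= D j) -> forall j, j0 <= j -> m_index (f j).2 X k.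
Proof.
move=> ix kD j /subnKC <-; elim: (j - j0) => [|n IH]; first by rewrite addn0.
have [b pb] := exec_enabled (j0 + n); have [app mE _] := exec_stepE _ _ pb.
rewrite addnS mE; apply: index_mstep (exec_stack _) app IH _.
by rewrite -(exec_depth_step _ _ pb) -addnS kD ?leq_addr.
Qed.

Lemma in_variable_eventually_constant X j0 : (forall j, j0 <= j -> m_in (f j).2 X) ->
  eventually (fun j => sV (f j.+1).1 X = sV (f j).1 X).
Proof.
move=> inX; apply: (@eps_descent_eventually_constant _ eps (fun j => sV (f j).1 X)).
- exact: eps_gt0.
- by move=> j; apply: exec_qvalid.
- exists j0 => j /inX inj; have [b pb] := exec_enabled j.
  by have [app _ step] := exec_stepE _ _ pb; apply: qtrans_in_nonincreasing inj app step.
- by move=> j; apply: f_eps.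
Qed.

Lemma decrement_below_not_infinitely_often d : eventually (fun i => d <= D i) ->
  ~ infinitely_often (fun i => exists X a k, pi (t i) = Some (ActD a X k) /\ k <= d).
Proof.
move=> [N dD] /infinitely_often_pigeonhole [X ioX].
have [j0 Nj0 [a0 [k0 [pj0 k0d]]]] := ioX N.
have ix0 : m_index (f j0).2 X k0 by have [[_ [_ [_ ix]]] _ _] := exec_stepE _ _ pj0.
have inX j : j0 <= j -> m_in (f j).2 X.
  move=> j0j; apply: index_in (exec_stack j) _ _ (index_persistent _ _ _ ix0 _ _ j0j).
  by move=> j' j0j'; apply: leq_trans k0d (dD _ (leq_trans Nj0 j0j')).
have [M HM] := in_variable_eventually_constant X j0 inX.
have [i] := ioX (maxn M j0); rewrite geq_max => /andP[Mi _] [a [k [pa _]]].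
have [app _ step] := exec_stepE _ _ pa.
by have := qtrans_dec_lt app step; rewrite HM // ltxx.
Qed.

Lemma push_eventually_stops d : eventually (fun i => d <= D i) ->
  eventually (fun i => forall a X k, pi (t i) = Some (ActD a X k) -> d < k) ->
  eventually (fun i => ~ exists X, pi (t i) = Some (Push X d)).
Proof.
move=> dD ActD_gt.
apply: (@bounded_counter_eventually_stops (fun i => m_c (f i).2 d) (Max Q)).
have [N HN] := eventually_and dD ActD_gt; exists N => i /HN [dDi gt].
have [b pb] := exec_enabled i; have [app mE _] := exec_stepE _ _ pb.
rewrite mE; split.
  by apply: counter_mstep (exec_stack i) app dDi _ => a X k bE; apply: gt; rewrite pb bE.
case=> X; rewrite pb => -[bE]; subst b; case: app => _ [_ [_ cd]] /=.
by rewrite eqxx.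
Qed.

Lemma move_eventually_stops : eventually (fun i => pi (t i) <> Some (Move Q)).
Proof.
apply: (@bounded_counter_eventually_stops (fun i => m_cT (f i).2) (Max Q)
  (fun i => pi (t i) = Some (Move Q))).
exists 0 => i _; have [b pb] := exec_enabled i; have [app mE _] := exec_stepE _ _ pb.
rewrite mE; split; first by case: (b).
by rewrite pb => -[bE]; subst b; case: app.
Qed.

Lemma decrement_above_absurd d : eventually (fun i => d <= D i) ->
  eventually (fun i => forall a X k, pi (t i) = Some (ActD a X k) -> d < k) ->
  infinitely_often (fun i => D i = d) -> False.
Proof.
move=> dD ActD_gt ioD; apply: not_eventually_Act.
have [N HN] := eventually_and (eventually_and dD ActD_gt)
  (eventually_and (push_eventually_stops d dD ActD_gt) move_eventually_stops).
have step j : N <= j -> D j = d -> D j.+1 = d /\ exists a, pi (t j) = Some (Act a).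
  move=> Nj Dj; have [[_ gt] [nopush nomove]] := HN j Nj.
  have [b pb] := exec_enabled j; have [app _ _] := exec_stepE _ _ pb.
  have := exec_depth_step _ _ pb; have st := exec_stack j.
  case: b pb app => [X e|X e||a|a X k] pb app /= Dj1.
  - by case: nopush; exists X; rewrite pb (push_level st app) Dj.
  - have [[dDj1 _] _] := HN j.+1 (leqW Nj); have [_ D_gt0] := pop_level st app; lia.
  - by case: nomove.
  - by split; [rewrite Dj1 Dj | exists a].
  - by have := actd_level st app; have := gt a X k pb; lia.
have [i0 Ni0 Di0] := ioD N.
have Dd n : D (i0 + n) = d.
  elim: n => [|n IH]; first by rewrite addn0.
  by rewrite addnS; apply: (step _ _ IH).1; apply: leq_trans Ni0 (leq_addr _ _).
exists i0 => j /subnKC <-; exact: (step _ (leq_trans Ni0 (leq_addr _ _)) (Dd _)).2.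
Qed.

Lemma infinite_exec_absurd : False.
Proof.
have [d [dD ioD]] := @bounded_liminf (fun i => D i) _ (fun i => depth_le (exec_stack i)).
have [io|/not_infinitely_often [N HN]] := classic
  (infinitely_often (fun i => exists X a k, pi (t i) = Some (ActD a X k) /\ k <= d)).
  exact: decrement_below_not_infinitely_often d dD io.
apply: (decrement_above_absurd d dD _ ioD); exists N => i /HN noActD a X k pa.
by rewrite ltnNge; apply/negP => kd; apply: noActD; exists X, a, k.
Qed.

End InfiniteExecution.

Theorem theorem13 (Q : QNP) (R : realType) (pi : fpolicy (TQ Q)) :
  strong_cyclic pi -> controller_solves R pi.
Proof.
move=> pi_sc eps eps_gt0 f [n|] [f_exec f_eps] f_max; last first.
  have f_eps' i := f_eps i I.
  by case: (infinite_exec_absurd Q R pi eps f pi_sc eps_gt0 f_exec f_eps' f_max).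
case: f_max => [[goal _]|stuck]; first by exists n; rewrite /= leqnn.
apply: NNPP => nogoal; have nongoal j : j <= n -> ~ qgoal (f j).1.
  by move=> jn goal; apply: nogoal; exists j.
apply/stuck/(strong_cyclic_enabled pi_sc (exec_init f_exec)).
- exact (exec_reach f_exec (leqnn n) (fun j jn => nongoal j (ltnW jn))).
- exact: nongoal.
Qed.
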